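(* Let $n\ge1$ and $\vec v,\vec w\in\hat N^n$. Then $\vec v<\vec w$ if and only if $\vec w^\dagger<\vec v^\dagger$ (componentwise order). Consequently, if $\mu$ denotes the Möbius function of the poset $(\hat N^n,\le)$, then $\mu(\vec v,\vec w)=\mu(\vec w^\dagger,\vec v^\dagger)$ for all $\vec v,\vec w\in\hat N^n$.
   Context: $\hat N^0=\{()\}$ (empty vector) and for $n\ge1$, $\hat N^n$ is the set of names of planar rooted binary trees with $n$ internal vertices; every element of $\hat N^n$, $n\ge1$, is uniquely $\vec v_l\vee\vec v_r:=(\vec v_l,1,p+1+\vec v_r)$ with $\vec v_l\in\hat N^p,\vec v_r\in\hat N^q$, $p+q+1=n$, where $k+(w_1,\dots,w_q)=(w_1+k,\dots,w_q+k)$. The dendriform involution $\dagger$ is defined by $()^\dagger=()$ and $(\vec v\vee\vec w)^\dagger=\vec w^\dagger\vee\vec v^\dagger$. Componentwise order: $\vec v\le\vec w$ iff $v_i\le w_i$ for all $i$; $<$ means $\le$ and $\neq$. *)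

From mathcomp Require Import all_boot all_order all_algebra.
Set Implicit Arguments. Unset Strict Implicit. Unset Printing Implicit Defensive.
Import GRing.Theory Num.Theory.

Inductive bt : Type := Leaf | Node of bt & bt.

Fixpoint isize (t : bt) : nat :=
  match t with Leaf => 0 | Node l r => (isize l + isize r).+1 end.

Fixpoint name (t : bt) : seq nat :=
  match t with
  | Leaf => [::]
  | Node l r => name l ++ 1 :: map (addn (isize l).+1) (name r)
  end.

(* The dendriform involution on trees: (v \/ w)^dagger = w^dagger \/ v^dagger.
   On names: dagger (name t) = name (mirror t). *)
Fixpoint mirror (t : bt) : bt :=
  match t with Leaf => Leaf | Node l r => Node (mirror r) (mirror l) end.

Fixpoint trees_f (fuel n : nat) : seq bt :=
  match fuel with
  | 0 => [:: Leaf]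
  | f.+1 =>
    match n with
    | 0 => [:: Leaf]
    | m.+1 => flatten [seq [seq Node l r | l <- trees_f f p, r <- trees_f f (m - p)]
                       | p <- iota 0 m.+1]
    end
  end.
Definition trees (n : nat) : seq bt := trees_f n n.

Definition hatN (n : nat) : seq (seq nat) := [seq name t | t <- trees n].

Definition vle (v w : seq nat) : bool := all2 leq v w.
Definition vlt (v w : seq nat) : bool := vle v w && (v != w).

Local Open Scope ring_scope.
Fixpoint mobius_f {T : eqType} (S : seq T) (le : rel T) (k : nat) (x y : T) : int :=
  if x == y then 1 else
  match k with
  | 0 => 0
  | k'.+1 =>
    if le x y then
      - \sum_(z <- S | le x z && (z != y) && le z y) mobius_f S le k' x z
    else 0
  end.
Definition mobius {T : eqType} (S : seq T) (le : rel T) (x y : T) : int :=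
  mobius_f S le (size S) x y.
Local Close Scope ring_scope.

(** The name of a tree lists, for each internal vertex in in-order, one plus
    the first position of its subtree; mirroring reverses the in-order and so
    exchanges first and last positions. The last position of the subtree of a
    vertex is determined monotonically by the first positions of all subtrees,
    hence the mirror reverses the componentwise order. As an involution of
    hatN n it is therefore an order anti-automorphism, and the Moebius function
    of a finite poset satisfies mu(x, y) = mu^op(y, x). *)

From HB Require Import structures.
From mathcomp Require Import all_boot all_order all_algebra.
From mathcomp Require Import zify.
Set Implicit Arguments. Unset Strict Implicit. Unset Printing Implicit Defensive.
Import GRing.Theory.

Lemma count_lt_sub (T : eqType) (a1 a2 : pred T) (s : seq T) x :
  subpred a1 a2 -> x \in s -> a2 x -> ~~ a1 x -> (count a1 s < count a2 s)%N.
Proof.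
move=> sub12; elim: s => //= y s IH; rewrite inE => /orP[/eqP <-|s_x] a2x a1x.
  by rewrite a2x (negbTE a1x) add0n add1n ltnS sub_count.
apply: leq_trans (_ : (a1 y + count a2 s <= _)%N); first by rewrite -addnS leq_add2l IH.
by rewrite leq_add2r; case a1y: (a1 y) => //; rewrite (sub12 _ a1y).
Qed.

Section Mobius.
Local Open Scope ring_scope.

Lemma big_seq_delta (T : eqType) (s : seq T) y (F : T -> int) : uniq s -> y \in s ->
  \sum_(z <- s) (if z == y then F z else 0) = F y.
Proof.
by move=> uniq_s s_y; rewrite (bigD1_seq y) //= eqxx big1 ?addr0 // => z /negbTE ->.
Qed.

Lemma mobius_fE (T : eqType) (S : seq T) (le : rel T) k x y : mobius_f S le k x y =
  if x == y then 1 else if k is k'.+1 then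
    if le x y then - \sum_(z <- S | le x z && (z != y) && le z y) mobius_f S le k' x z
    else 0
  else 0.
Proof. by case: k. Qed.

Section MobiusTransport.
Variable T : eqType.
Implicit Types (S : seq T) (le : rel T).

Lemma mobius_f_perm S1 S2 le k x y : perm_eq S1 S2 ->
  mobius_f S1 le k x y = mobius_f S2 le k x y.
Proof.
move=> eq_S; elim: k y => [|k IH] y; rewrite !mobius_fE //.
case: (x == y) => //; case: (le x y) => //.
by rewrite (perm_big _ eq_S); congr (- _); apply: eq_bigr => z _; apply: IH.
Qed.

Lemma mobius_f_eq S le1 le2 k x y : le1 =2 le2 ->
  mobius_f S le1 k x y = mobius_f S le2 k x y.
Proof.
move=> eq_le; elim: k y => [|k IH] y; rewrite !mobius_fE // eq_le.
case: (x == y) => //; case: (le2 x y) => //; congr (- _).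
rewrite (eq_bigl (fun z => le2 x z && (z != y) && le2 z y)) => [|z]; last by rewrite !eq_le.
by apply: eq_bigr => z _; apply: IH.
Qed.

Lemma mobius_f_map (U : eqType) (f : U -> T) (S : seq U) le k x y : injective f ->
  mobius_f (map f S) le k (f x) (f y) = mobius_f S (relpre f le) k x y.
Proof.
move=> inj_f; elim: k y => [|k IH] y; rewrite mobius_fE [RHS]mobius_fE (inj_eq inj_f) //.
case: (x == y) => //=; case: (le (f x) (f y)) => //; rewrite big_map; congr (- _).
rewrite (eq_bigl (fun z => le (f x) (f z) && (z != y) && le (f z) (f y))) => [|z].
  by apply: eq_bigr => z _; apply: IH.
by rewrite (inj_eq inj_f).
Qed.

Lemma mobius_perm S1 S2 le x y : perm_eq S1 S2 ->
  mobius S1 le x y = mobius S2 le x y.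
Proof. by move=> eq_S; rewrite /mobius (perm_size eq_S); apply: mobius_f_perm. Qed.

Lemma mobius_eq S le1 le2 x y : le1 =2 le2 -> mobius S le1 x y = mobius S le2 x y.
Proof. exact: mobius_f_eq. Qed.

Lemma mobius_map (U : eqType) (f : U -> T) (S : seq U) le x y : injective f ->
  mobius (map f S) le (f x) (f y) = mobius S (relpre f le) x y.
Proof. by move=> inj_f; rewrite /mobius size_map mobius_f_map. Qed.

End MobiusTransport.

Section PosetMobius.
Variables (T : eqType) (S : seq T) (le : rel T).
Hypotheses (uniq_S : uniq S) (le_refl : reflexive le) (le_anti : antisymmetric le)
  (le_trans : transitive le).

Definition interval_count x y := count (fun z => le x z && (z != y) && le z y) S.

Lemma interval_count_lt x y z : z \in S -> le x z && (z != y) && le z y ->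
  (interval_count x z < interval_count x y)%N.
Proof.
move=> S_z /andP[/andP[le_xz ne_zy] le_zy]; apply: (count_lt_sub _ S_z).
- move=> w /andP[/andP[-> ne_wz] le_wz] /=; rewrite (le_trans le_wz le_zy) andbT.
  by apply: contra ne_zy => /eqP eq_wy; rewrite -eq_wy (@le_anti w z) ?le_wz // eq_wy.
- by rewrite le_xz ne_zy.
- by rewrite eqxx andbF.
Qed.

Lemma mobius_f_fuel k1 k2 x y :
  (interval_count x y <= k1)%N -> (interval_count x y <= k2)%N ->
  mobius_f S le k1 x y = mobius_f S le k2 x y.
Proof.
elim: k1 k2 y => [|k1 IH] [|k2] y le_k1 le_k2 //; rewrite !mobius_fE;
  case: eqP => // ne_xy; case: ifP => // le_xy.
1,2: by rewrite big_hasC ?oppr0 // has_count -leqNgt.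
congr (- _); rewrite big_seq_cond [RHS]big_seq_cond.
apply: eq_bigr => z /andP[S_z xzy]; have := interval_count_lt S_z xzy.
by move=> lt_z; apply: IH; rewrite -ltnS (leq_trans lt_z).
Qed.

Lemma mobius_refl x : mobius S le x x = 1.
Proof. by rewrite /mobius mobius_fE eqxx. Qed.

Lemma mobius_eq0 x y : ~~ le x y -> mobius S le x y = 0.
Proof.
move=> nle_xy; rewrite /mobius mobius_fE; case: eqP => [eq_xy|_].
  by rewrite eq_xy le_refl in nle_xy.
by case: (size S) => //; rewrite (negbTE nle_xy).
Qed.

Lemma mobius_rec x y : x != y -> le x y ->
  mobius S le x y = - \sum_(z <- S | le x z && (z != y) && le z y) mobius S le x z.
Proof.
move=> ne_xy le_xy; rewrite /mobius mobius_fE (negbTE ne_xy).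
case eq_size: (size S) => [|k].
  by move/size0nil: eq_size => ->; rewrite big_nil oppr0.
rewrite le_xy; congr (- _); rewrite big_seq_cond [RHS]big_seq_cond.
apply: eq_bigr => z /andP[S_z xzy]; have := interval_count_lt S_z xzy.
have := count_size (fun z => le x z && (z != y) && le z y) S.
rewrite -/(interval_count x y) eq_size => le_k lt_z.
by apply: mobius_f_fuel; rewrite ?count_size //; lia.
Qed.

Lemma mobius_sum x y : y \in S ->
  \sum_(z <- S | le z y) mobius S le x z = (x == y)%:R.
Proof.
move=> S_y; rewrite (bigID (le x)) /= [X in _ + X]big1 ?addr0 => [|z /andP[_]]; last first.
  exact: mobius_eq0.
rewrite (eq_bigl (fun z => le x z && le z y)) => [|z]; last exact: andbC.
have [->|ne_xy] := eqVneq x y.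
  rewrite (eq_bigl (pred1 y)) => [|z]; last first.
    by apply/andP/eqP => [[le_yz le_zy]|->]; [apply/le_anti/andP | rewrite le_refl].
  by rewrite big_mkcond big_seq_delta ?mobius_refl.
case le_xy: (le x y); last first.
  rewrite big_pred0 // => z; apply: contraFF le_xy => /andP[].
  exact: le_trans.
rewrite big_mkcond (bigD1_seq y) //= le_xy le_refl (mobius_rec ne_xy le_xy) -big_mkcondr.
rewrite (eq_bigl (fun z => le x z && (z != y) && le z y)) ?addNr // => z.
by rewrite andbCA andbA.
Qed.

End PosetMobius.

(* The Moebius function is a two-sided inverse of the zeta function in the
   incidence algebra; comparing its left inverse for [le] with its right
   inverse for the dual order gives [mu x y = mu^op y x]. *)
Lemma mobius_dual (T : eqType) (S : seq T) (le : rel T) x y :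
  uniq S -> reflexive le -> antisymmetric le -> transitive le ->
  x \in S -> y \in S -> mobius S le x y = mobius S (fun a b => le b a) y x.
Proof.
move=> uniq_S le_refl le_anti le_trans S_x S_y.
set nu := mobius S (fun a b => le b a) y.
have nu_sum z : z \in S -> \sum_(w <- S | le z w) nu w = (z == y)%:R.
  move=> S_z; rewrite eq_sym -(mobius_sum (le := fun a b => le b a) uniq_S) //.
  - by move=> a b; rewrite andbC; apply: le_anti.
  - by move=> a b c le_ba le_cb; apply: le_trans le_cb le_ba.
transitivity (\sum_(z <- S) mobius S le x z * \sum_(w <- S | le z w) nu w).
  rewrite -(big_seq_delta (mobius S le x) uniq_S S_y) !big_seq.
  by apply: eq_bigr => z S_z; rewrite nu_sum // mulr_natr mulrb.
under eq_bigr do rewrite mulr_sumr big_mkcond.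
rewrite exchange_big /= -(big_seq_delta nu uniq_S S_x) !big_seq.
apply: eq_bigr => w S_w.
by rewrite -big_mkcond -mulr_suml mobius_sum // mulr_natl mulrb eq_sym.
Qed.

End Mobius.

Fixpoint bt_eqb (a b : bt) : bool :=
  match a, b with
  | Leaf, Leaf => true
  | Node a1 a2, Node b1 b2 => bt_eqb a1 b1 && bt_eqb a2 b2
  | _, _ => false
  end.

Lemma bt_eqP : Equality.axiom bt_eqb.
Proof.
move=> a b; apply: (iffP idP) => [|<-]; last by elim: a => //= a1 -> a2 ->.
by elim: a b => [|a1 IH1 a2 IH2] [|b1 b2] //= /andP[/IH1 -> /IH2 ->].
Qed.

HB.instance Definition _ := hasDecEq.Build bt bt_eqP.

Lemma eq_Node a b c d : (Node a b == Node c d) = (a == c) && (b == d).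
Proof. by []. Qed.

Lemma size_name t : size (name t) = isize t.
Proof. by elim: t => //= l IHl r IHr; rewrite size_cat /= size_map IHl IHr addnS. Qed.

Lemma isize_mirror t : isize (mirror t) = isize t.
Proof. by elim: t => //= l -> r ->; rewrite addnC. Qed.

Lemma mirrorK : involutive mirror.
Proof. by elim=> //= l -> r ->. Qed.

Lemma mirror_inj : injective mirror.
Proof. exact: inv_inj mirrorK. Qed.

(* With the internal vertices of [t] numbered in in-order, the subtree rooted
   at vertex [i] occupies the positions [subtree_start t i <= k < subtree_end t i]. *)
Fixpoint subtree_start (t : bt) (i : nat) : nat :=
  match t with
  | Leaf => 0
  | Node l r =>
    if i < isize l then subtree_start l i
    else if i == isize l then 0
    else (isize l).+1 + subtree_start r (i - (isize l).+1)
  end.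

Fixpoint subtree_end (t : bt) (i : nat) : nat :=
  match t with
  | Leaf => 0
  | Node l r =>
    if i < isize l then subtree_end l i
    else if i == isize l then (isize l + isize r).+1
    else (isize l).+1 + subtree_end r (i - (isize l).+1)
  end.

Lemma nth_name t i : i < isize t -> nth 0 (name t) i = (subtree_start t i).+1.
Proof.
elim: t i => //= l IHl r IHr i lt_i.
rewrite nth_cat size_name; case: (ltngtP i (isize l)) => [lt_il|lt_li|->].
- exact: IHl.
- have -> : i - isize l = (i - (isize l).+1).+1 by lia.
  rewrite /= (nth_map 0) ?size_name; last by lia.
  by rewrite IHr ?addnS //; lia.
- by rewrite subnn.
Qed.

Lemma subtree_end_bounds t i : i < isize t -> i < subtree_end t i <= isize t.
Proof.
elim: t i => //= l IHl r IHr i lt_i.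
case: (ltngtP i (isize l)) => [lt_il|lt_li|_]; last by lia.
- by have := IHl i lt_il; lia.
- by have := IHr (i - (isize l).+1); lia.
Qed.

Lemma subtree_start_nested t i k :
  i < isize t -> i < k -> k < subtree_end t i -> i < subtree_start t k.
Proof.
elim: t i k => //= l IHl r IHr i k lt_i lt_ik.
case: (ltngtP i (isize l)) => [lt_il|lt_li|eq_il] lt_k.
- have := subtree_end_bounds lt_il => bounds.
  have -> : k < isize l by lia.
  exact: IHl.
- have -> : (k < isize l) = false by lia.
  have -> : (k == isize l) = false by lia.
  by have := IHr (i - (isize l).+1) (k - (isize l).+1); lia.
- have -> : (k < isize l) = false by lia.
  have -> : (k == isize l) = false by lia.
  lia.
Qed.

Lemma subtree_start_end t i :
  i < isize t -> subtree_end t i < isize t -> subtree_start t (subtree_end t i) <= i.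
Proof.
elim: t i => //= l IHl r IHr i lt_i.
case: (ltngtP i (isize l)) => [lt_il|lt_li|_]; last by lia.
- have := subtree_end_bounds lt_il => bounds _.
  case: (ltngtP (subtree_end l i) (isize l)) => [lt_el||]; by [apply: IHl | lia].
- set j := i - (isize l).+1 => lt_e.
  have lt_j : j < isize r by lia.
  have := subtree_end_bounds lt_j => bounds.
  have -> : ((isize l).+1 + subtree_end r j < isize l) = false by lia.
  have -> : ((isize l).+1 + subtree_end r j == isize l) = false by lia.
  have -> : (isize l).+1 + subtree_end r j - (isize l).+1 = subtree_end r j by lia.
  by have := IHr j lt_j; lia.
Qed.

Lemma subtree_start_mirror t j : j < isize t ->
  subtree_start (mirror t) j = isize t - subtree_end t (isize t - 1 - j).
Proof.
elim: t j => //= l IHl r IHr j lt_j; rewrite isize_mirror.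
case: (ltngtP j (isize r)) => [lt_jr|lt_rj|->].
- have -> : ((isize l + isize r).+1 - 1 - j < isize l) = false by lia.
  have -> : ((isize l + isize r).+1 - 1 - j == isize l) = false by lia.
  have -> : (isize l + isize r).+1 - 1 - j - (isize l).+1 = isize r - 1 - j by lia.
  rewrite IHr //; have := @subtree_end_bounds r (isize r - 1 - j); lia.
- set j' := j - (isize r).+1; have lt_j' : j' < isize l by lia.
  have -> : (isize l + isize r).+1 - 1 - j = isize l - 1 - j' by lia.
  have lt_i : isize l - 1 - j' < isize l by lia.
  rewrite IHl // lt_i; have := subtree_end_bounds lt_i; lia.
- have -> : (isize l + isize r).+1 - 1 - isize r = isize l by lia.
  by rewrite ltnn eqxx subnn.
Qed.

(* The end of the subtree of [i] is the first [k > i] with [k = isize t] or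
   [subtree_start t k <= i]; so later starts force later ends. *)
Lemma subtree_end_mono a b : isize a = isize b ->
  (forall i, i < isize a -> subtree_start a i <= subtree_start b i) ->
  forall i, i < isize a -> subtree_end a i <= subtree_end b i.
Proof.
move=> eq_size le_start i lt_ia; have lt_ib : i < isize b by rewrite -eq_size.
have /andP[lt_ea le_ea] := subtree_end_bounds lt_ia.
have /andP[lt_eb le_eb] := subtree_end_bounds lt_ib.
have [lt_e|] := ltnP (subtree_end b i) (isize b); last by lia.
rewrite leqNgt; apply/negP => lt_ba.
have := subtree_start_end lt_ib lt_e.
have := subtree_start_nested lt_ia lt_eb lt_ba.
have := le_start (subtree_end b i) (_ : _ < isize a).
lia.
Qed.

Lemma vleP (v w : seq nat) :
  reflect (size v = size w /\ forall i, i < size v -> nth 0 v i <= nth 0 w i)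
          (vle v w).
Proof.
rewrite /vle; apply: (iffP idP).
  elim: v w => [|x v IH] [|y w] //= /andP[le_xy /IH [eq_size le_nth]].
  by split=> [|[|i] /=]; [rewrite eq_size | | apply: le_nth].
case; elim: v w => [|x v IH] [|y w] //= [eq_size] le_nth.
by rewrite (le_nth 0) // IH // => i; apply: (le_nth i.+1).
Qed.

Lemma vle_refl : reflexive vle.
Proof. by move=> v; apply/vleP. Qed.

Lemma vle_trans : transitive vle.
Proof.
move=> v u w /vleP[eq_uv le_uv] /vleP[eq_vw le_vw]; apply/vleP.
split=> [|i lt_i]; first by rewrite eq_uv.
by rewrite (leq_trans (le_uv i lt_i)) // le_vw // -eq_uv.
Qed.

Lemma vle_anti : antisymmetric vle.
Proof.
move=> v w /andP[/vleP[eq_size le_vw] /vleP[_ le_wv]].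
apply: (eq_from_nth (x0 := 0)) => // i lt_i.
by apply/eqP; rewrite eqn_leq le_vw // le_wv // -eq_size.
Qed.

Lemma vle_nameP a b :
  reflect (isize a = isize b /\
           forall i, i < isize a -> subtree_start a i <= subtree_start b i)
          (vle (name a) (name b)).
Proof.
apply: (iffP (vleP _ _)); rewrite !size_name => -[eq_size le_ab];
  split=> // i lt_i; have := le_ab i lt_i; rewrite !nth_name // -eq_size //.
Qed.

Lemma vle_name_mirror_rev a b :
  vle (name a) (name b) -> vle (name (mirror b)) (name (mirror a)).
Proof.
move=> /vle_nameP[eq_size le_start]; apply/vle_nameP.
rewrite !isize_mirror; split=> // j lt_j; rewrite -eq_size in lt_j.
rewrite !subtree_start_mirror -?eq_size //.
have := subtree_end_mono eq_size le_start (_ : isize a - 1 - j < isize a); lia.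
Qed.

Lemma vle_name_mirror a b :
  vle (name (mirror a)) (name (mirror b)) = vle (name b) (name a).
Proof.
apply/idP/idP => [|]; last exact: vle_name_mirror_rev.
by move/vle_name_mirror_rev; rewrite !mirrorK.
Qed.

Lemma name_Node_isize l r l' r' :
  name (Node l r) = name (Node l' r') -> isize l = isize l'.
Proof.
move=> eq_name; wlog lt_ll' : l r l' r' eq_name / isize l < isize l'.
  move=> wlog_lt; have [lt|lt|//] := ltngtP (isize l) (isize l').
  - exact: (wlog_lt l r l' r').
  - exact/esym/(wlog_lt l' r' l r).
have /= eq_size : isize (Node l r) = isize (Node l' r') by rewrite -!size_name eq_name.
have := congr1 (nth 0 ^~ (isize l')) eq_name.
rewrite !nth_name /= ?ltnn ?eqxx; try lia.
have -> : (isize l' < isize l) = false by lia.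
by have -> : (isize l' == isize l) = false by lia.
Qed.

Lemma name_inj : injective name.
Proof.
elim=> [|l IHl r IHr] [|l' r'] //=; try by case: (name _).
move=> eq_name; have eq_isize := name_Node_isize eq_name.
move/eqP: eq_name; rewrite eqseq_cat ?size_name //.
by case/andP=> /eqP/IHl -> /eqP[] /(inj_map (@addnI _))/IHr ->.
Qed.

Lemma count_allpairs_Node (a : bt) (ls rs : seq bt) :
  count (pred1 a) [seq Node l r | l <- ls, r <- rs] =
  if a is Node al ar then count (pred1 al) ls * count (pred1 ar) rs else 0.
Proof.
elim: ls => [|l ls IH]; first by case: a.
rewrite allpairs_cons count_cat IH count_map; case: a {IH} => [|al ar] /=.
  by rewrite (eq_count (a2 := pred0)) ?count_pred0.
rewrite mulnDl; congr (_ + _); have [->|ne_l] := eqVneq l al.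
  by rewrite mul1n; apply: eq_count => r /=; rewrite eq_Node eqxx.
rewrite mul0n (eq_count (a2 := pred0)) ?count_pred0 // => r /=.
by rewrite eq_Node (negbTE ne_l).
Qed.

Lemma count_trees_f f m a : m <= f -> count (pred1 a) (trees_f f m) = (isize a == m).
Proof.
elim: f m a => [|f IH] [|m] a le_mf; try by case: a.
change (trees_f f.+1 m.+1) with (flatten [seq [seq Node l r | l <- trees_f f p,
  r <- trees_f f (m - p)] | p <- iota 0 m.+1]).
rewrite count_flatten -map_comp; case: a => [|al ar].
  rewrite (@eq_map _ _ _ (fun=> 0)) => [|p /=]; last by rewrite count_allpairs_Node.
  by elim: (iota 0 m.+1).
rewrite (_ : map _ _ =
  [seq nat_of_bool ((p == isize al) && (isize al + isize ar == m)) | p <- iota 0 m.+1]);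
  last first.
  apply/eq_in_map => p; rewrite mem_iota /= => lt_p.
  by rewrite count_allpairs_Node !IH; lia.
rewrite sumn_count eqSS; case: eqP => [eq_m|_]; last first.
  by rewrite (eq_count (a2 := pred0)) ?count_pred0 // => p /=; rewrite andbF.
rewrite (eq_count (a2 := pred1 (isize al))) => [|p /=]; last by rewrite andbT.
by rewrite count_uniq_mem ?iota_uniq // mem_iota; apply/eqP; lia.
Qed.

Lemma mem_trees n a : (a \in trees n) = (isize a == n).
Proof. by rewrite -has_pred1 has_count count_trees_f //; case: (isize a == n). Qed.

Lemma uniq_trees n : uniq (trees n).
Proof. by apply: count_mem_uniq => a; rewrite mem_trees count_trees_f. Qed.

Lemma perm_trees_mirror n : perm_eq (trees n) (map mirror (trees n)).
Proof.
apply: uniq_perm; rewrite ?(map_inj_uniq mirror_inj) ?uniq_trees // => a.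
by rewrite -{2}(mirrorK a) (mem_map mirror_inj) !mem_trees isize_mirror.
Qed.

Theorem mainTheorem16 (n : nat) (hn : 1 <= n) (t u : bt)
  (ht : isize t = n) (hu : isize u = n) :
  (vlt (name t) (name u) <-> vlt (name (mirror u)) (name (mirror t))) /\
  mobius (hatN n) vle (name t) (name u) =
  mobius (hatN n) vle (name (mirror u)) (name (mirror t)).
Proof.
split.
  by rewrite /vlt vle_name_mirror !(inj_eq name_inj) !(inj_eq mirror_inj) [u == t]eq_sym.
have trees_t : t \in trees n by rewrite mem_trees ht.
have trees_u : u \in trees n by rewrite mem_trees hu.
rewrite /hatN [RHS](mobius_perm _ _ _ (perm_map name (perm_trees_mirror n))).
rewrite -map_comp !mobius_map => [|a b /name_inj/mirror_inj //|]; last exact: name_inj.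
rewrite [RHS](mobius_eq _ _ _ (le2 := fun a b => relpre name vle b a)) => [|a b].
  apply: mobius_dual; rewrite ?uniq_trees //.
  - by move=> a; apply: vle_refl.
  - by move=> a b /vle_anti/name_inj.
  - by move=> a b c; apply: vle_trans.
exact: vle_name_mirror.
Qed.
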